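(* Let $\mathcal{A}$ be a pca with a partial numbering $\gamma : \omega \to \mathcal{A}$ and let $X = \{ \langle n, m, k\rangle \mid n, m, k \in \omega,\ \gamma(n) \cdot \gamma(m) = \gamma(k) \}$. Then $\mathcal{A}$ is embeddable in $\mathcal{G}^X$ and hence in $\mathcal{G}$.
   Context: A pca is a set with a partial binary application operation containing distinct $\mathrm{s},\mathrm{k}$ with $\mathrm{k}ab\downarrow=a$, $\mathrm{s}ab\downarrow$, $\mathrm{s}abc\simeq(ac)(bc)$. An embedding of pcas is an injective map $f$ with: if $ab$ is defined then $f(a)f(b)$ is defined and equals $f(ab)$. A partial numbering of $\mathcal{A}$ is a surjective partial function $\gamma:\omega\rightharpoonup\mathcal{A}$. $\mathcal{G}$ is $\mathcal{P}(\omega)$ with application $A\cdot B=\{n:\exists u\,(\langle n,u\rangle\in A\wedge D_u\subseteq B)\}$, where $\langle\cdot,\cdot\rangle$ is a bijective computable pairing with $\langle 0,0\rangle=0$ (extended to triples in the standard way) and $D_u$ is the finite set with canonical code $u$. $\mathcal{G}^X$ is the least class containing $X$ and all c.e. sets and closed under this application (equivalently, all sets enumeration-reducible to $X$). *)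

From Stdlib Require Import Arith List.
Import ListNotations.

Definition oapp {A : Type} (app : A -> A -> option A)
  (x y : option A) : option A :=
  match x, y with
  | Some a, Some b => app a b
  | _, _ => None
  end.

(* A pca: a set with a partial binary application containing distinct s, k
   with  k a b ↓ = a,  s a b ↓,  s a b c ≃ (a c)(b c)  (Kleene equality,
   expressed as equality in option A). *)
Definition is_pca (A : Type) (app : A -> A -> option A) : Prop :=
  exists s k : A, s <> k /\
    (forall a b, oapp app (app k a) (Some b) = Some a) /\
    (forall a b, oapp app (app s a) (Some b) <> None) /\
    (forall a b c,
        oapp app (oapp app (app s a) (Some b)) (Some c)
        = oapp app (app a c) (app b c)).

Definition partial_numbering {A : Type} (gamma : nat -> option A) : Prop :=
  forall a : A, exists n, gamma n = Some a.

Definition pair (n m : nat) : nat := (n + m) * (n + m + 1) / 2 + m.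
Definition triple (n m k : nat) : nat := pair n (pair m k).

Definition D (u x : nat) : Prop := Nat.testbit u x = true.

Definition set_eq (P Q : nat -> Prop) : Prop := forall n, P n <-> Q n.

Definition Gapp (P Q : nat -> Prop) : nat -> Prop :=
  fun n => exists u, P (pair n u) /\ (forall x, D u x -> Q x).

Inductive code : Type :=
| CZero : code
| CSucc : code
| CProj : nat -> code
| CComp : code -> list code -> code
| CRec : code -> code -> code
| CMu : code -> code.

Inductive eval : code -> list nat -> nat -> Prop :=
| ev_zero : forall v, eval CZero v 0
| ev_succ : forall x v, eval CSucc (x :: v) (S x)
| ev_proj : forall i v, i < length v -> eval (CProj i) v (nth i v 0)
| ev_comp : forall f gs v ys y,
    evals gs v ys -> eval f ys y -> eval (CComp f gs) v y
| ev_rec0 : forall f g v y, eval f v y -> eval (CRec f g) (0 :: v) y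
| ev_recS : forall f g n v z y,
    eval (CRec f g) (n :: v) z -> eval g (n :: z :: v) y ->
    eval (CRec f g) (S n :: v) y
| ev_mu : forall f v n,
    eval f (n :: v) 0 ->
    (forall m, m < n -> exists k, eval f (m :: v) (S k)) ->
    eval (CMu f) v n
with evals : list code -> list nat -> list nat -> Prop :=
| evs_nil : forall v, evals [] v []
| evs_cons : forall g gs v y ys,
    eval g v y -> evals gs v ys -> evals (g :: gs) v (y :: ys).

Definition ce (P : nat -> Prop) : Prop :=
  exists c : code, forall n, P n <-> exists y, eval c [n] y.

Inductive GX (X : nat -> Prop) : (nat -> Prop) -> Prop :=
| GX_X : forall P, set_eq P X -> GX X P
| GX_ce : forall P, ce P -> GX X P
| GX_app : forall P Q R, GX X P -> GX X Q -> set_eq R (Gapp P Q) -> GX X R.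

Definition G_embedding {A : Type} (app : A -> A -> option A)
  (f : A -> nat -> Prop) : Prop :=
  (forall a b, set_eq (f a) (f b) -> a = b) /\
  (forall a b c, app a b = Some c -> set_eq (Gapp (f a) (f b)) (f c)).

From Stdlib Require Import Arith List Lia.
Import ListNotations.

(* Send a to the union of the sets F_k over the codes k of a, where F_k is
   the least set containing the token <k,1> and containing <x, u> with
   D_u = {<m,1>} whenever <k,m,c> is in X and x is in F_c.  Since 0 lies in
   no F_k, tokens never take part in an application, so F_k . S is the union
   of the F_c with <k,m,c> in X and <m,1> in S; hence the map is a
   homomorphism, and the tokens make it injective.  Every F_k is E_k . X for
   the c.e. set E_k of those <y, U> for which a chain of triples from D_U
   leads from k to y, and the image of a is F_i . F_n for codes i of the
   identity s k k and n of a, so it lies in G^X. *)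

(** * Primitive recursive expressions *)

Inductive pexp : Type :=
| PVar : nat -> pexp
| PZero : pexp
| PSucc : pexp -> pexp
| PRec : pexp -> pexp -> pexp -> pexp
| PComp : pexp -> pexps -> pexp
with pexps : Type :=
| PNil : pexps
| PCons : pexp -> pexps -> pexps.

Scheme pexp_mut_ind := Induction for pexp Sort Prop
with pexps_mut_ind := Induction for pexps Sort Prop.

Fixpoint peval (env : list nat) (e : pexp) : nat :=
  match e with
  | PVar i => nth i env 0
  | PZero => 0
  | PSucc e => S (peval env e)
  | PRec m b s =>
      nat_rect (fun _ => nat) (peval env b)
        (fun i acc => peval (i :: acc :: env) s) (peval env m)
  | PComp f es => peval (pevals env es) f
  end
with pevals (env : list nat) (es : pexps) : list nat :=
  match es with
  | PNil => []
  | PCons e es => peval env e :: pevals env es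
  end.

Fixpoint plength (es : pexps) : nat :=
  match es with PNil => 0 | PCons _ es => S (plength es) end.

Lemma pevals_length env es : length (pevals env es) = plength es.
Proof. induction es; simpl; auto. Qed.

Definition projections (n : nat) : list code := map CProj (seq 0 n).

Fixpoint compile (n : nat) (e : pexp) : code :=
  match e with
  | PVar i => if i <? n then CProj i else CZero
  | PZero => CZero
  | PSucc e => CComp CSucc [compile n e]
  | PRec m b s =>
      CComp (CRec (compile n b) (compile (S (S n)) s))
        (compile n m :: projections n)
  | PComp f es => CComp (compile (plength es) f) (compiles n es)
  end
with compiles (n : nat) (es : pexps) : list code :=
  match es with
  | PNil => []
  | PCons e es => compile n e :: compiles n es
  end.

Lemma skipn_nth_cons (env : list nat) k :
  k < length env -> skipn k env = nth k env 0 :: skipn (S k) env.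
Proof.
  revert k; induction env as [|x env IH]; intros [|k] Hk; simpl in *;
    try lia; auto.
  apply IH; lia.
Qed.

Lemma evals_projections_from j k env ys :
  k + j = length env ->
  evals (map CProj (seq k j)) env ys <-> ys = skipn k env.
Proof.
  revert k ys; induction j as [|j IH]; intros k ys Hk; simpl.
  - rewrite skipn_all2 by lia.
    split; [intro H; inversion H; auto | intros ->; constructor].
  - rewrite skipn_nth_cons by lia. split.
    + intro H; inversion H as [|g gs v y ys' Hy Hys]; subst.
      inversion Hy; subst. f_equal. apply IH; [lia | exact Hys].
    + intros ->. constructor; [constructor; lia | apply IH; [lia | auto]].
Qed.

Lemma evals_projections env ys :
  evals (projections (length env)) env ys <-> ys = env.
Proof. exact (evals_projections_from (length env) 0 env ys eq_refl). Qed.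

Lemma compile_sound e n env :
  length env = n -> eval (compile n e) env (peval env e).
Proof.
  revert e n env.
  apply (pexp_mut_ind
    (fun e => forall n env, length env = n -> eval (compile n e) env (peval env e))
    (fun es => forall n env, length env = n ->
                 evals (compiles n es) env (pevals env es))); simpl.
  - intros i n env <-. destruct (Nat.ltb_spec i (length env)).
    + constructor; lia.
    + rewrite nth_overflow by lia. constructor.
  - constructor.
  - intros e IH n env Hn. repeat econstructor. now apply IH.
  - intros m IHm b IHb s IHs n env Hn. econstructor.
    + constructor; [now apply IHm | subst n; now apply evals_projections].
    + induction (peval env m) as [|d IHd]; simpl.
      * constructor. now apply IHb.
      * econstructor; [exact IHd | apply IHs; simpl; lia].
  - intros f IHf es IHes n env Hn. econstructor; [now apply IHes |].
    apply IHf, pevals_length.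
  - constructor.
  - intros e IHe es IHes n env Hn. constructor; auto.
Qed.

Lemma compile_deterministic e n env y :
  length env = n -> eval (compile n e) env y -> y = peval env e.
Proof.
  revert e n env y.
  apply (pexp_mut_ind
    (fun e => forall n env y, length env = n ->
                eval (compile n e) env y -> y = peval env e)
    (fun es => forall n env ys, length env = n ->
                 evals (compiles n es) env ys -> ys = pevals env es)); simpl.
  - intros i n env y <- Hev. destruct (Nat.ltb_spec i (length env)).
    + now inversion Hev.
    + inversion Hev. now rewrite nth_overflow by lia.
  - intros n env y _ Hev. now inversion Hev.
  - intros e IH n env y Hn Hev. inversion Hev as [| | |f gs v ys y' Hgs Hf| | |]; subst.
    inversion Hgs as [|g gs' v y1 ys' Hg Hnil]; subst.
    inversion Hnil; subst. inversion Hf; subst. f_equal. eapply IH; eauto.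
  - intros m IHm b IHb s IHs n env y Hn Hev.
    inversion Hev as [| | |f gs v ys y' Hgs Hrec| | |]; subst.
    inversion Hgs as [|g gs' v y1 ys' Hm Hproj]; subst.
    apply evals_projections in Hproj; subst.
    apply (IHm _ _ _ eq_refl) in Hm; subst.
    clear Hev Hgs. revert y Hrec. induction (peval env m) as [|d IHd];
      intros y Hrec; inversion Hrec; subst; simpl.
    + eapply IHb; eauto.
    + match goal with H : eval (CRec _ _) _ _ |- _ => apply IHd in H; subst end.
      eapply IHs; eauto.
  - intros f IHf es IHes n env y Hn Hev.
    inversion Hev as [| | |f' gs v ys y' Hgs Hf| | |]; subst.
    apply (IHes _ _ _ eq_refl) in Hgs; subst.
    eapply IHf; [apply pevals_length | eassumption].
  - intros n env ys _ Hev. now inversion Hev.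
  - intros e IHe es IHes n env ys Hn Hev. inversion Hev; subst. f_equal; eauto.
Qed.

Lemma ce_exists_zero (h : pexp) (f : nat -> nat -> nat) :
  (forall z t, peval [z; t] h = f z t) -> ce (fun t => exists z, f z t = 0).
Proof.
  intro Hh. exists (CMu (compile 2 h)). intro t. split.
  - intro Hex.
    assert (Hdec : forall z, f z t = 0 \/ f z t <> 0) by (intro; lia).
    destruct (dec_inh_nat_subset_has_unique_least_element _ Hdec Hex)
      as [z [[Hz Hleast] _]].
    exists z. constructor.
    + pose proof (compile_sound h 2 [z; t] eq_refl) as C.
      now rewrite Hh, Hz in C.
    + intros k Hk. destruct (f k t) as [|v] eqn:E.
      * specialize (Hleast k E). lia.
      * exists v. pose proof (compile_sound h 2 [k; t] eq_refl) as C.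
        now rewrite Hh, E in C.
  - intros [y Hy]. inversion Hy as [| | | | | |f' v n Hzero _]; subst.
    exists y. rewrite <- Hh. symmetry. eapply compile_deterministic; [|eassumption].
    reflexivity.
Qed.

Definition pcomp1 f a := PComp f (PCons a PNil).
Definition pcomp2 f a b := PComp f (PCons a (PCons b PNil)).
Definition pcomp3 f a b c := PComp f (PCons a (PCons b (PCons c PNil))).

Lemma peval_comp1 env f a : peval env (pcomp1 f a) = peval [peval env a] f.
Proof. reflexivity. Qed.

Lemma peval_comp2 env f a b :
  peval env (pcomp2 f a b) = peval [peval env a; peval env b] f.
Proof. reflexivity. Qed.

Lemma peval_comp3 env f a b c :
  peval env (pcomp3 f a b c) = peval [peval env a; peval env b; peval env c] f.
Proof. reflexivity. Qed.

(* Rewriting rather than [cbn] keeps the kernel from unfolding the named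
   expressions when it rechecks the conversion. *)
Ltac psimpl :=
  repeat first [rewrite peval_comp1 | rewrite peval_comp2 | rewrite peval_comp3];
  cbn [peval nth].

Lemma peval_rec env m b s (g : nat -> nat -> nat) :
  (forall i acc, peval (i :: acc :: env) s = g i acc) ->
  peval env (PRec m b s) = nat_rect (fun _ => nat) (peval env b) g (peval env m).
Proof.
  intro Hs. simpl. induction (peval env m); simpl; congruence.
Qed.

Definition pconst (k : nat) : pexp := Nat.iter k PSucc PZero.

Lemma peval_const env k : peval env (pconst k) = k.
Proof. induction k; simpl; auto. Qed.

Definition p_add := PRec (PVar 1) (PVar 0) (PSucc (PVar 1)).

Lemma peval_add x y : peval [x; y] p_add = x + y.
Proof.
  unfold p_add. rewrite (peval_rec _ _ _ _ (fun _ acc => S acc)) by reflexivity.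
  psimpl. induction y; simpl; lia.
Qed.

Definition p_sub :=
  PRec (PVar 1) (PVar 0) (pcomp1 (PRec (PVar 0) PZero (PVar 0)) (PVar 1)).

Lemma peval_sub x y : peval [x; y] p_sub = x - y.
Proof.
  unfold p_sub. rewrite (peval_rec _ _ _ _ (fun _ acc => pred acc)).
  - psimpl. induction y as [|y IH]; simpl; [lia | rewrite IH; lia].
  - intros i acc. psimpl. destruct acc; reflexivity.
Qed.

Definition dist (x y : nat) : nat := (x - y) + (y - x).

Lemma dist_eq0 x y : dist x y = 0 <-> x = y.
Proof. unfold dist. lia. Qed.

Definition p_dist :=
  pcomp2 p_add (pcomp2 p_sub (PVar 0) (PVar 1)) (pcomp2 p_sub (PVar 1) (PVar 0)).

Lemma peval_dist x y : peval [x; y] p_dist = dist x y.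
Proof. unfold p_dist. psimpl. now rewrite !peval_sub, peval_add. Qed.

Definition p_pow2 := PRec (PVar 0) (PSucc PZero) (pcomp2 p_add (PVar 1) (PVar 1)).

Lemma peval_pow2 x : peval [x] p_pow2 = 2 ^ x.
Proof.
  unfold p_pow2. rewrite (peval_rec _ _ _ _ (fun _ acc => acc + acc)).
  - psimpl. induction x as [|x IH]; simpl; [reflexivity | rewrite IH; lia].
  - intros. psimpl. apply peval_add.
Qed.

Definition p_odd := PRec (PVar 0) PZero (pcomp2 p_sub (PSucc PZero) (PVar 1)).

Lemma peval_odd x : peval [x] p_odd = Nat.b2n (Nat.odd x).
Proof.
  unfold p_odd. rewrite (peval_rec _ _ _ _ (fun _ acc => 1 - acc)).
  - psimpl. induction x as [|x IH]; [reflexivity|]. cbn [nat_rect]. rewrite IH.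
    rewrite Nat.odd_succ, <- Nat.negb_odd. now destruct (Nat.odd x).
  - intros. psimpl. now rewrite peval_sub.
Qed.

Lemma div2_succ n : Nat.div2 (S n) = Nat.div2 n + Nat.b2n (Nat.odd n).
Proof.
  pose proof (Nat.div2_odd n) as H. pose proof (Nat.div2_odd (S n)) as HS.
  rewrite Nat.odd_succ, <- Nat.negb_odd in HS.
  destruct (Nat.odd n); simpl in *; lia.
Qed.

Definition p_div2 := PRec (PVar 0) PZero (pcomp2 p_add (PVar 1) (pcomp1 p_odd (PVar 0))).

Lemma peval_div2 x : peval [x] p_div2 = Nat.div2 x.
Proof.
  unfold p_div2. rewrite (peval_rec _ _ _ _ (fun i acc => acc + Nat.b2n (Nat.odd i))).
  - psimpl. induction x as [|x IH]; [reflexivity|]. cbn [nat_rect].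
    now rewrite IH, div2_succ.
  - intros. psimpl. now rewrite peval_odd, peval_add.
Qed.

Lemma testbit_iter_div2 U f : Nat.testbit U f = Nat.odd (Nat.iter f Nat.div2 U).
Proof.
  revert U; induction f as [|f IH]; intro U; [apply Nat.bit0_odd|].
  now rewrite <- Nat.testbit_div2, IH, <- Nat.iter_succ_r.
Qed.

Definition p_iter (s : pexp) := PRec (PVar 1) (PVar 0) (pcomp1 s (PVar 1)).

Lemma peval_iter s (g : nat -> nat) x n :
  (forall a, peval [a] s = g a) -> peval [x; n] (p_iter s) = Nat.iter n g x.
Proof.
  intro Hs. unfold p_iter. rewrite (peval_rec _ _ _ _ (fun _ acc => g acc)).
  - psimpl. induction n; simpl; congruence.
  - intros. psimpl. apply Hs.
Qed.

Definition p_testbit := pcomp1 p_odd (p_iter p_div2).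

Lemma peval_testbit U f : peval [U; f] p_testbit = Nat.b2n (Nat.testbit U f).
Proof.
  unfold p_testbit. psimpl.
  rewrite (peval_iter _ Nat.div2) by apply peval_div2.
  now rewrite peval_odd, testbit_iter_div2.
Qed.

(** * Cantor pairing *)

Fixpoint tri (s : nat) : nat := match s with 0 => 0 | S s => tri s + S s end.

Lemma tri_le_mono s s' : s <= s' -> tri s <= tri s'.
Proof. induction 1; simpl; lia. Qed.

Lemma pair_tri n m : pair n m = tri (n + m) + m.
Proof.
  unfold pair. f_equal. induction (n + m) as [|s IH]; [reflexivity|].
  replace (S s * (S s + 1)) with (s * (s + 1) + S s * 2) by lia.
  rewrite Nat.div_add by lia. simpl tri. lia.
Qed.

Definition p_tri := PRec (PVar 0) PZero (pcomp2 p_add (PVar 1) (PSucc (PVar 0))).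

Lemma peval_tri s : peval [s] p_tri = tri s.
Proof.
  unfold p_tri. rewrite (peval_rec _ _ _ _ (fun i acc => acc + S i)).
  - psimpl. induction s; simpl; congruence.
  - intros. psimpl. apply peval_add.
Qed.

Definition p_pair :=
  pcomp2 p_add (pcomp1 p_tri (pcomp2 p_add (PVar 0) (PVar 1))) (PVar 1).

Lemma peval_pair n m : peval [n; m] p_pair = pair n m.
Proof. unfold p_pair. psimpl. now rewrite !peval_add, peval_tri, pair_tri. Qed.

(* [diag p] is the index of the diagonal [tri s <= p < tri (S s)] containing
   [p]; the correction [1 - (tri (S d) - S p)] is [1] exactly when [S p]
   starts a new diagonal. *)
Fixpoint diag (p : nat) : nat :=
  match p with
  | 0 => 0
  | S p => diag p + (1 - (tri (S (diag p)) - S p))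
  end.

Lemma diag_spec p : tri (diag p) <= p < tri (S (diag p)).
Proof.
  induction p as [|p IH]; [simpl; lia|]. cbn [diag].
  destruct (Nat.le_gt_cases (tri (S (diag p))) (S p)).
  - replace (1 - (tri (S (diag p)) - S p)) with 1 by lia.
    rewrite Nat.add_1_r. simpl tri in *. lia.
  - replace (1 - (tri (S (diag p)) - S p)) with 0 by lia.
    rewrite Nat.add_0_r. simpl tri in *. lia.
Qed.

Lemma diag_unique p s : tri s <= p < tri (S s) -> diag p = s.
Proof.
  intro H. pose proof (diag_spec p).
  destruct (lt_eq_lt_dec (diag p) s) as [[Hlt|Heq]|Hlt]; auto.
  - pose proof (tri_le_mono (S (diag p)) s Hlt). lia.
  - pose proof (tri_le_mono (S s) (diag p) Hlt). lia.
Qed.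

Definition unpair2 (p : nat) : nat := p - tri (diag p).
Definition unpair1 (p : nat) : nat := diag p - unpair2 p.

Lemma diag_pair n m : diag (pair n m) = n + m.
Proof. apply diag_unique. rewrite pair_tri. simpl. lia. Qed.

Lemma unpair2_pair n m : unpair2 (pair n m) = m.
Proof. unfold unpair2. rewrite diag_pair, pair_tri. lia. Qed.

Lemma unpair1_pair n m : unpair1 (pair n m) = n.
Proof. unfold unpair1. rewrite unpair2_pair, diag_pair. lia. Qed.

Lemma pair_inj n m n' m' : pair n m = pair n' m' -> n = n' /\ m = m'.
Proof.
  intro H. split.
  - now rewrite <- (unpair1_pair n m), H, unpair1_pair.
  - now rewrite <- (unpair2_pair n m), H, unpair2_pair.
Qed.

Lemma pair_ge_r n m : m <= pair n m.
Proof. rewrite pair_tri. lia. Qed.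

Definition p_diag :=
  PRec (PVar 0) PZero
    (pcomp2 p_add (PVar 1)
       (pcomp2 p_sub (PSucc PZero)
          (pcomp2 p_sub (pcomp1 p_tri (PSucc (PVar 1))) (PSucc (PVar 0))))).

Lemma peval_diag p : peval [p] p_diag = diag p.
Proof.
  unfold p_diag.
  rewrite (peval_rec _ _ _ _ (fun i acc => acc + (1 - (tri (S acc) - S i)))).
  - psimpl. induction p as [|p IH]; [reflexivity|].
    cbn [nat_rect diag]. now rewrite IH.
  - intros. psimpl. now rewrite peval_tri, !peval_sub, peval_add.
Qed.

Definition p_unpair2 := pcomp2 p_sub (PVar 0) (pcomp1 p_tri (pcomp1 p_diag (PVar 0))).

Lemma peval_unpair2 p : peval [p] p_unpair2 = unpair2 p.
Proof. unfold p_unpair2. psimpl. now rewrite peval_diag, peval_tri, peval_sub. Qed.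

Definition p_unpair1 := pcomp2 p_sub (pcomp1 p_diag (PVar 0)) (pcomp1 p_unpair2 (PVar 0)).

Lemma peval_unpair1 p : peval [p] p_unpair1 = unpair1 p.
Proof. unfold p_unpair1. psimpl. now rewrite peval_diag, peval_unpair2, peval_sub. Qed.

(** * Chains *)

Definition token (k : nat) : nat := pair k 1.

Definition p_token := pcomp2 p_pair (PVar 0) (PSucc PZero).

Lemma peval_token k : peval [k] p_token = token k.
Proof. unfold p_token. psimpl. now rewrite peval_pair. Qed.

Definition p_triple := pcomp2 p_pair (PVar 0) (pcomp2 p_pair (PVar 1) (PVar 2)).

Lemma peval_triple n m k : peval [n; m; k] p_triple = triple n m k.
Proof. unfold p_triple. psimpl. now rewrite !peval_pair. Qed.

(* A chain is coded by the list [w] (lists being nested pairs) of its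
   entries [<k_i, <x_i, m_i>>]. *)
Definition entry (w i : nat) : nat := unpair1 (Nat.iter i unpair2 w).
Definition chain_code (w i : nat) : nat := unpair1 (entry w i).
Definition chain_elem (w i : nat) : nat := unpair1 (unpair2 (entry w i)).
Definition chain_arg (w i : nat) : nat := unpair2 (unpair2 (entry w i)).

Lemma entry_cons_0 e w : entry (pair e w) 0 = e.
Proof. apply unpair1_pair. Qed.

Lemma entry_cons_S e w i : entry (pair e w) (S i) = entry w i.
Proof. unfold entry. now rewrite Nat.iter_succ_r, unpair2_pair. Qed.

Definition p_entry := pcomp1 p_unpair1 (p_iter p_unpair2).
Definition p_chain_code := pcomp1 p_unpair1 p_entry.
Definition p_chain_elem := pcomp1 p_unpair1 (pcomp1 p_unpair2 p_entry).
Definition p_chain_arg := pcomp1 p_unpair2 (pcomp1 p_unpair2 p_entry).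

Lemma peval_entry w i : peval [w; i] p_entry = entry w i.
Proof.
  unfold p_entry. psimpl.
  now rewrite (peval_iter _ unpair2) by apply peval_unpair2; rewrite peval_unpair1.
Qed.

Lemma peval_chain_code w i : peval [w; i] p_chain_code = chain_code w i.
Proof. unfold p_chain_code. psimpl. now rewrite peval_entry, peval_unpair1. Qed.

Lemma peval_chain_elem w i : peval [w; i] p_chain_elem = chain_elem w i.
Proof.
  unfold p_chain_elem. psimpl. now rewrite peval_entry, peval_unpair2, peval_unpair1.
Qed.

Lemma peval_chain_arg w i : peval [w; i] p_chain_arg = chain_arg w i.
Proof. unfold p_chain_arg. psimpl. now rewrite peval_entry, !peval_unpair2. Qed.

Definition link_defect (U w i : nat) : nat :=
  dist (chain_elem w i) (pair (chain_elem w (S i)) (2 ^ token (chain_arg w i)))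
  + (1 - Nat.b2n (Nat.testbit U (triple (chain_code w i) (chain_arg w i)
                                        (chain_code w (S i))))).

Definition links_defect (U w r : nat) : nat :=
  nat_rect (fun _ => nat) 0 (fun i acc => acc + link_defect U w i) r.

Definition chain_defect (k U y r w : nat) : nat :=
  dist (chain_code w 0) k + dist (chain_elem w 0) y + links_defect U w r
  + dist (chain_elem w r) (token (chain_code w r)).

Definition chain (k U y r w : nat) : Prop :=
  chain_code w 0 = k /\ chain_elem w 0 = y /\
  (forall i, i < r ->
     chain_elem w i = pair (chain_elem w (S i)) (2 ^ token (chain_arg w i)) /\
     D U (triple (chain_code w i) (chain_arg w i) (chain_code w (S i)))) /\
  chain_elem w r = token (chain_code w r).

Lemma link_defect_eq0 U w i :
  link_defect U w i = 0 <->
  chain_elem w i = pair (chain_elem w (S i)) (2 ^ token (chain_arg w i)) /\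
  D U (triple (chain_code w i) (chain_arg w i) (chain_code w (S i))).
Proof.
  unfold link_defect, D. rewrite <- (dist_eq0 (chain_elem w i)).
  destruct (Nat.testbit U _); simpl Nat.b2n.
  - split; [intro H; split; [lia | reflexivity] | intros [H _]; lia].
  - split; [lia | intros [_ H]; discriminate].
Qed.

Lemma links_defect_eq0 U w r :
  links_defect U w r = 0 <-> forall i, i < r -> link_defect U w i = 0.
Proof.
  induction r as [|r IH]; simpl; [split; intros; lia|].
  fold (links_defect U w r). split.
  - intros H i Hi. destruct (Nat.eq_dec i r) as [->|Hne]; [lia|].
    apply IH; lia.
  - intro H. rewrite (proj2 IH) by auto. rewrite H; auto.
Qed.

Lemma chain_defect_eq0 k U y r w : chain_defect k U y r w = 0 <-> chain k U y r w.
Proof.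
  unfold chain_defect, chain.
  rewrite <- (dist_eq0 (chain_code w 0)), <- (dist_eq0 (chain_elem w 0)),
    <- (dist_eq0 (chain_elem w r)).
  assert (Hlinks : (forall i, i < r -> link_defect U w i = 0) <->
    (forall i, i < r ->
       chain_elem w i = pair (chain_elem w (S i)) (2 ^ token (chain_arg w i)) /\
       D U (triple (chain_code w i) (chain_arg w i) (chain_code w (S i))))).
  { split; intros H i Hi; apply link_defect_eq0; auto. }
  rewrite <- Hlinks, <- links_defect_eq0. lia.
Qed.

Definition p_link_defect :=
  pcomp2 p_add
    (pcomp2 p_dist (pcomp2 p_chain_elem (PVar 1) (PVar 2))
       (pcomp2 p_pair (pcomp2 p_chain_elem (PVar 1) (PSucc (PVar 2)))
          (pcomp1 p_pow2 (pcomp1 p_token (pcomp2 p_chain_arg (PVar 1) (PVar 2))))))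
    (pcomp2 p_sub (PSucc PZero)
       (pcomp2 p_testbit (PVar 0)
          (pcomp3 p_triple (pcomp2 p_chain_code (PVar 1) (PVar 2))
             (pcomp2 p_chain_arg (PVar 1) (PVar 2))
             (pcomp2 p_chain_code (PVar 1) (PSucc (PVar 2)))))).

Lemma peval_link_defect U w i : peval [U; w; i] p_link_defect = link_defect U w i.
Proof.
  unfold p_link_defect. psimpl.
  now rewrite !peval_chain_elem, !peval_chain_arg, !peval_chain_code, peval_token,
    peval_pow2, !peval_pair, peval_dist, peval_triple, peval_testbit,
    peval_sub, peval_add.
Qed.

Definition p_links_defect :=
  PRec (PVar 2) PZero
    (pcomp2 p_add (PVar 1) (pcomp3 p_link_defect (PVar 2) (PVar 3) (PVar 0))).

Lemma peval_links_defect U w r : peval [U; w; r] p_links_defect = links_defect U w r.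
Proof.
  unfold p_links_defect.
  rewrite (peval_rec _ _ _ _ (fun i acc => acc + link_defect U w i)).
  - reflexivity.
  - intros. psimpl. now rewrite peval_link_defect, peval_add.
Qed.

Definition p_chain_defect (k : nat) : pexp :=
  let r := pcomp1 p_unpair1 (PVar 0) in
  let w := pcomp1 p_unpair2 (PVar 0) in
  let y := pcomp1 p_unpair1 (PVar 1) in
  let U := pcomp1 p_unpair2 (PVar 1) in
  pcomp2 p_add
    (pcomp2 p_add
       (pcomp2 p_add (pcomp2 p_dist (pcomp2 p_chain_code w PZero) (pconst k))
          (pcomp2 p_dist (pcomp2 p_chain_elem w PZero) y))
       (pcomp3 p_links_defect U w r))
    (pcomp2 p_dist (pcomp2 p_chain_elem w r) (pcomp1 p_token (pcomp2 p_chain_code w r))).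

Lemma peval_chain_defect k z t :
  peval [z; t] (p_chain_defect k)
  = chain_defect k (unpair2 t) (unpair1 t) (unpair1 z) (unpair2 z).
Proof.
  unfold p_chain_defect. psimpl.
  rewrite !peval_unpair1, !peval_unpair2, !peval_chain_code, !peval_chain_elem,
    peval_links_defect, peval_token, !peval_dist, !peval_add, peval_const.
  reflexivity.
Qed.

Definition chain_set (k : nat) : nat -> Prop :=
  fun t => exists z, chain_defect k (unpair2 t) (unpair1 t) (unpair1 z) (unpair2 z) = 0.

Lemma chain_set_ce k : ce (chain_set k).
Proof. exact (ce_exists_zero _ _ (peval_chain_defect k)). Qed.

Lemma chain_set_pair k y U : chain_set k (pair y U) <-> exists r w, chain k U y r w.
Proof.
  unfold chain_set. rewrite unpair1_pair, unpair2_pair. split.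
  - intros [z Hz]. exists (unpair1 z), (unpair2 z). now apply chain_defect_eq0.
  - intros [r [w Hc]]. exists (pair r w).
    rewrite unpair1_pair, unpair2_pair. now apply chain_defect_eq0.
Qed.

Lemma D_pow2 p x : D (2 ^ p) x <-> x = p.
Proof. unfold D. now rewrite Nat.pow2_bits_eqb, Nat.eqb_eq. Qed.

Lemma D_lor_pow2 p U x : D (Nat.lor (2 ^ p) U) x <-> x = p \/ D U x.
Proof.
  unfold D. rewrite Nat.lor_spec, Bool.orb_true_iff. fold (D (2 ^ p) x).
  now rewrite D_pow2.
Qed.

Lemma D_0 x : ~ D 0 x.
Proof. unfold D. now rewrite Nat.bits_0. Qed.

Lemma chain_nil k U : chain k U (token k) 0 (pair (pair k (pair (token k) 0)) 0).
Proof.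
  unfold chain, chain_code, chain_elem.
  rewrite entry_cons_0, unpair1_pair, unpair2_pair, unpair1_pair.
  repeat split; intros; lia.
Qed.

Lemma chain_cons k m c x U r w :
  D U (triple k m c) -> chain c U x r w ->
  chain k U (pair x (2 ^ token m)) (S r)
    (pair (pair k (pair (pair x (2 ^ token m)) m)) w).
Proof.
  unfold chain, chain_code, chain_elem, chain_arg.
  rewrite !entry_cons_S, entry_cons_0, !unpair2_pair, !unpair1_pair.
  intros HD (Hc & Hx & Hlinks & Hlast). split; [|split; [|split]]; auto.
  intros [|i] Hi; rewrite ?entry_cons_S, ?entry_cons_0, ?unpair2_pair, ?unpair1_pair.
  - now rewrite Hx, Hc.
  - apply Hlinks; lia.
Qed.

Lemma chain_mono k U U' y r w :
  (forall x, D U x -> D U' x) -> chain k U y r w -> chain k U' y r w.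
Proof.
  intros HU (Hc & Hx & Hlinks & Hlast). split; [|split; [|split]]; auto.
  intros i Hi. destruct (Hlinks i Hi). auto.
Qed.

(** * The sets F_k *)

Section Graph.

Variable X : nat -> Prop.

Inductive graph : nat -> nat -> Prop :=
| graph_token k : graph k (token k)
| graph_step k m c x : X (triple k m c) -> graph c x -> graph k (pair x (2 ^ token m)).

Lemma graph_chain k y :
  graph k y -> exists U r w, (forall x, D U x -> X x) /\ chain k U y r w.
Proof.
  induction 1 as [k|k m c x HX _ (U & r & w & HU & Hch)].
  - exists 0, 0, (pair (pair k (pair (token k) 0)) 0).
    split; [intros x Hx; now apply D_0 in Hx | apply chain_nil].
  - exists (Nat.lor (2 ^ triple k m c) U), (S r),
      (pair (pair k (pair (pair x (2 ^ token m)) m)) w). split.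
    + intros t Ht. apply D_lor_pow2 in Ht as [->|Ht]; auto.
    + apply chain_cons with c; [apply D_lor_pow2; auto |].
      apply (chain_mono _ U); auto. intros t Ht. apply D_lor_pow2; auto.
Qed.

Lemma chain_graph k U y r w :
  (forall x, D U x -> X x) -> chain k U y r w -> graph k y.
Proof.
  intros HU (<- & <- & Hlinks & Hlast).
  assert (Hsuffix : forall d i, i + d = r -> graph (chain_code w i) (chain_elem w i)).
  { induction d as [|d IH]; intros i Hi.
    - replace i with r by lia. rewrite Hlast. constructor.
    - destruct (Hlinks i ltac:(lia)) as [-> HD].
      apply graph_step with (chain_code w (S i)); [now apply HU | apply IH; lia]. }
  now apply (Hsuffix r 0).
Qed.

Lemma graph_eq_Gapp k : set_eq (graph k) (Gapp (chain_set k) X).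
Proof.
  intro y. split.
  - intro Hy. destruct (graph_chain k y Hy) as (U & r & w & HU & Hch).
    exists U. split; [apply chain_set_pair; eauto | exact HU].
  - intros (U & Hset & HU). apply chain_set_pair in Hset as (r & w & Hch).
    eapply chain_graph; eauto.
Qed.

Lemma GX_graph k : GX X (graph k).
Proof.
  apply (GX_app X (chain_set k) X).
  - apply GX_ce, chain_set_ce.
  - apply GX_X. intro; reflexivity.
  - apply graph_eq_Gapp.
Qed.

Lemma token_ne_step k x m : token k <> pair x (2 ^ token m).
Proof.
  intro H. apply pair_inj in H as [_ H].
  pose proof (Nat.pow_le_mono_r 2 1 (token m) ltac:(lia) (pair_ge_r m 1)).
  simpl in *. lia.
Qed.

Lemma graph_token_inv c k : graph c (token k) -> c = k.
Proof.
  intro H. remember (token k) as t eqn:Ht. destruct H as [c|c m c' x _ _].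
  - now apply pair_inj in Ht.
  - symmetry in Ht. now apply token_ne_step in Ht.
Qed.

Lemma graph_not_0 c : ~ graph c 0.
Proof.
  intro H. remember 0 as t eqn:Ht. destruct H as [c|c m c' x _ _].
  - pose proof (pair_ge_r c 1). unfold token in Ht. lia.
  - pose proof (pair_ge_r x (2 ^ token m)). pose proof (Nat.pow_nonzero 2 (token m)). lia.
Qed.

(* A token [<k, 1>] would need [0] in [B], as [D 1 = {0}]. *)
Lemma Gapp_graph (B : nat -> Prop) k y :
  ~ B 0 ->
  Gapp (graph k) B y <-> exists m c, B (token m) /\ X (triple k m c) /\ graph c y.
Proof.
  intro HB0. split.
  - intros (u & Hu & Hsub). remember (pair y u) as t eqn:Ht.
    destruct Hu as [k|k m c x HX Hx].
    + apply pair_inj in Ht as [_ <-]. exfalso. now apply HB0, Hsub.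
    + apply pair_inj in Ht as [<- <-]. exists m, c.
      split; [apply Hsub, D_pow2; reflexivity | auto].
  - intros (m & c & Hm & HX & Hy). exists (2 ^ token m). split.
    + now apply graph_step with c.
    + intros x Hx. now apply D_pow2 in Hx as ->.
Qed.

End Graph.

(** * The embedding *)

Lemma pca_identity A app :
  is_pca A app -> exists i : A, forall a, app i a = Some a.
Proof.
  intros (s & k & _ & Hk & Hs & Hsab).
  specialize (Hs k k). destruct (app s k) as [sk|] eqn:Esk; simpl in Hs; [|contradiction].
  destruct (app sk k) as [skk|] eqn:Eskk; [|contradiction].
  exists skk. intro a. specialize (Hsab k k a). rewrite Esk in Hsab. simpl in Hsab.
  rewrite Eskk in Hsab. simpl in Hsab. rewrite Hsab.
  destruct (app k a) as [ka|] eqn:Eka.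
  - specialize (Hk a ka). now rewrite Eka in Hk.
  - specialize (Hk a a). now rewrite Eka in Hk.
Qed.

Definition app_graph {A : Type} (app : A -> A -> option A)
  (gamma : nat -> option A) : nat -> Prop :=
  fun t => exists n m k a b c,
    t = triple n m k /\ gamma n = Some a /\ gamma m = Some b /\
    gamma k = Some c /\ app a b = Some c.

Lemma triple_inj n m k n' m' k' :
  triple n m k = triple n' m' k' -> n = n' /\ m = m' /\ k = k'.
Proof.
  unfold triple. intro H. apply pair_inj in H as [-> H].
  now apply pair_inj in H as [-> ->].
Qed.

Section Embedding.

Context {A : Type} (app : A -> A -> option A) (gamma : nat -> option A).
Hypothesis numbering : partial_numbering gamma.

Local Notation X := (app_graph app gamma).

Lemma app_graph_triple n m k :
  X (triple n m k) <-> exists a b c,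
    gamma n = Some a /\ gamma m = Some b /\ gamma k = Some c /\ app a b = Some c.
Proof.
  split.
  - intros (n' & m' & k' & a & b & c & Ht & Hn & Hm & Hk & Hab).
    apply triple_inj in Ht as (-> & -> & ->). now exists a, b, c.
  - intros (a & b & c & H). now exists n, m, k, a, b, c.
Qed.

Definition embed (a : A) : nat -> Prop :=
  fun y => exists k, gamma k = Some a /\ graph X k y.

Lemma embed_token a n : embed a (token n) <-> gamma n = Some a.
Proof.
  split.
  - intros (k & Hk & Hg). now apply graph_token_inv in Hg as ->.
  - intro Hn. exists n. split; [exact Hn | constructor].
Qed.

Lemma embed_not_0 a : ~ embed a 0.
Proof. intros (k & _ & Hg). exact (graph_not_0 _ _ Hg). Qed.

Lemma embed_injective a b : set_eq (embed a) (embed b) -> a = b.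
Proof.
  intro Heq. destruct (numbering a) as [n Hn].
  assert (Hb : embed b (token n)) by now apply Heq, embed_token.
  apply embed_token in Hb. congruence.
Qed.

Lemma Gapp_graph_embed k b y :
  Gapp (graph X k) (embed b) y <->
  exists a c, gamma k = Some a /\ app a b = Some c /\ embed c y.
Proof.
  rewrite Gapp_graph by apply embed_not_0. split.
  - intros (m & c & Hm & HX & Hy). apply embed_token in Hm.
    apply app_graph_triple in HX as (a & b' & d & Hk & Hb' & Hc & Hab).
    exists a, d. rewrite Hm in Hb'. injection Hb' as <-.
    split; [exact Hk | split; [exact Hab | now exists c]].
  - intros (a & c & Hk & Hab & (d & Hd & Hy)). destruct (numbering b) as [m Hm].
    exists m, d. repeat split; [now apply embed_token | | exact Hy].
    apply app_graph_triple. now exists a, b, c.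
Qed.

Lemma embed_app a b c :
  app a b = Some c -> set_eq (Gapp (embed a) (embed b)) (embed c).
Proof.
  intros Hab y. split.
  - intros (u & (k & Hk & Hu) & Hsub).
    assert (Hy : Gapp (graph X k) (embed b) y) by (exists u; auto).
    apply Gapp_graph_embed in Hy as (a' & c' & Hk' & Hab' & Hy).
    congruence.
  - intro Hy. destruct (numbering a) as [k Hk].
    assert (Hk_app : Gapp (graph X k) (embed b) y) by (apply Gapp_graph_embed; eauto).
    destruct Hk_app as (u & Hu & Hsub). exists u. split; [exists k|]; auto.
Qed.

Lemma embed_GX (i : A) :
  (forall a, app i a = Some a) -> forall a, GX X (embed a).
Proof.
  intros Hi a. destruct (numbering i) as [ni Hni]. destruct (numbering a) as [n Hn].
  apply (GX_app X (graph X ni) (graph X n)); [apply GX_graph .. |].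
  intro y. rewrite Gapp_graph by apply graph_not_0. split.
  - intros (c & Hc & Hy). exists n, c. split; [constructor | split; [| exact Hy]].
    apply app_graph_triple. exists i, a, a. auto.
  - intros (m & c & Hm & HX & Hy). apply graph_token_inv in Hm as ->.
    apply app_graph_triple in HX as (i' & a' & d & Hni' & Hn' & Hc & Hi'a').
    exists c. split; [|exact Hy]. congruence.
Qed.

End Embedding.

Theorem theorem7p1 (A : Type) (app : A -> A -> option A)
  (gamma : nat -> option A) :
  is_pca A app ->
  partial_numbering gamma ->
  let X : nat -> Prop := fun t => exists n m k a b c,
      t = triple n m k /\ gamma n = Some a /\ gamma m = Some b /\
      gamma k = Some c /\ app a b = Some c in
  (exists f : A -> nat -> Prop,
      G_embedding app f /\ (forall a, GX X (f a))) /\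
  (exists f : A -> nat -> Prop, G_embedding app f).
Proof.
  intros Hpca Hnum X.
  destruct (pca_identity A app Hpca) as [i Hi].
  assert (Hemb : G_embedding app (embed app gamma)).
  { split; [apply embed_injective | apply embed_app]; exact Hnum. }
  split; exists (embed app gamma); [split |]; auto.
  exact (embed_GX app gamma Hnum i Hi).
Qed.
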